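(* Let $\mathcal V\subseteq B(H)$ be an operator system, let $p\in\mathcal V$ be a projection in $B(H)$, and let $q=I-p$. If $a,b,c\in\mathcal V$ with $a=a^*$ and $b=b^*$, then $pap+pcq+qc^*p+qbq\ge0$ in $B(H)$ if and only if $\begin{pmatrix}a&c\\c^*&b\end{pmatrix}\in C(p\oplus q)$.
   Context: $C(p\oplus q)=\{y\in M_2(\mathcal V): y=y^*,\ (p\oplus q)\,y\,(p\oplus q)\ge0 \text{ in } B(H^2)\}$ where $p\oplus q=\mathrm{diag}(p,q)$. *)

From mathcomp Require Import all_boot all_order all_algebra.
Import Order.TTheory GRing.Theory Num.Theory.
From mathcomp Require Import complex.
From mathcomp Require Import Rstruct.
From Stdlib Require Import Reals.
Set Implicit Arguments. Unset Strict Implicit. Unset Printing Implicit Defensive.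
Local Open Scope ring_scope.

Notation CC := (complex R).

Section Hilbert.
Variable H : lmodType CC.
Variable ip : H -> H -> CC.   (* inner product, linear in the first slot *)

(* ip is an inner product making H a (complete) complex Hilbert space.
   Ordering on CC: 0 <= z iff z is a nonnegative real. *)
Definition is_hilbert : Prop :=
  [/\ (forall (a : CC) (x y z : H), ip (a *: x + y) z = a * ip x z + ip y z),
      (forall x y : H, ip y x = (ip x y)^*),
      (forall x : H, 0 <= ip x x),
      (forall x : H, ip x x = 0 -> x = 0) &
      (* completeness w.r.t. the norm ||x|| = sqrt (ip x x) (stated with squares) *)
      (forall u : nat -> H,
         (forall e : CC, 0 < e -> exists N : nat, forall m n : nat, leq N m -> leq N n ->
            ip (u m - u n) (u m - u n) < e) ->
         exists l : H, forall e : CC, 0 < e -> exists N : nat, forall n : nat, leq N n ->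
            ip (u n - l) (u n - l) < e)].

Definition bounded_op (T : H -> H) : Prop :=
  (forall (a : CC) (x y : H), T (a *: x + y) = a *: T x + T y) /\
  exists M : CC, 0 <= M /\ forall x, ip (T x) (T x) <= M * ip x x.

Definition is_adjoint (T S : H -> H) : Prop :=
  forall x y : H, ip (T x) y = ip x (S y).

Definition operator_system (V : (H -> H) -> Prop) : Prop :=
  [/\ (forall T, V T -> bounded_op T),
      V (fun x => x),
      (forall (a : CC) T U, V T -> V U -> V (fun x => a *: T x + U x)) &
      (forall T, V T -> exists S, V S /\ is_adjoint T S)].

Definition is_projection (p : H -> H) : Prop :=
  [/\ bounded_op p, (forall x, p (p x) = p x) & is_adjoint p p].

Definition op_pos (T : H -> H) : Prop := forall x : H, 0 <= ip (T x) x.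

(* A 2x2 operator matrix T acts on H^2 = H ⊕ H (vectors x : 'I_2 -> H) by
   (T x)_i = \sum_j T i j (x j);  the inner product on H^2 is
   <x, y> = \sum_i ip (x i) (y i).  T >= 0 in B(H^2): *)
Definition mx_pos (T : 'M[H -> H]_2) : Prop :=
  forall x : 'I_2 -> H, 0 <= \sum_(i < 2) ip (\sum_(j < 2) T i j (x j)) (x i).

(* y equals its adjoint in M_2(B(H)): adj(y)_{ij} = adj(y_{ji}). *)
Definition mx_selfadj (y : 'M[H -> H]_2) : Prop :=
  forall i j : 'I_2, is_adjoint (y j i) (y i j).

Definition mx2 (a c d b : H -> H) : 'M[H -> H]_2 :=
  \matrix_(i < 2, j < 2)
     if i == ord0 then (if j == ord0 then a else c) else (if j == ord0 then d else b).

Definition compl (p : H -> H) : H -> H := fun x => x - p x.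

(* C(p ⊕ q) with q = I - p:
   { y in M_2(V) : y = y^*, (p ⊕ q) y (p ⊕ q) >= 0 in B(H^2) }. *)
Definition Cpq (V : (H -> H) -> Prop) (p : H -> H) (y : 'M[H -> H]_2) : Prop :=
  let d := mx2 p (fun _ => 0) (fun _ => 0) (compl p) in
  [/\ (forall i j, V (y i j)),
      mx_selfadj y &
      mx_pos (\matrix_(i < 2, j < 2) (fun x => \sum_(k < 2) \sum_(l < 2) d i k (y k l (d l j x))))].

End Hilbert.

(* Since the ranges of p and q = I - p are orthogonal, the quadratic form of the
   compression (p ⊕ q) [[a, c], [c^*, b]] (p ⊕ q) at (x0, x1) equals that of
   T := pap + pcq + qc^*p + qbq at p x0 + q x1.  So positivity of T gives that of
   the compression, and conversely the diagonal vector (x, x) recovers <T x, x>,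
   as p x + q x = x. *)
From mathcomp Require Import all_boot all_order all_algebra.
Import Order.TTheory GRing.Theory Num.Theory.
From mathcomp Require Import complex.
From mathcomp Require Import Rstruct.
From Stdlib Require Import Reals.
From Stdlib Require Import FunctionalExtensionality.
Set Implicit Arguments. Unset Strict Implicit. Unset Printing Implicit Defensive.
Local Open Scope ring_scope.

Section Sesquilinear.
Variables (H : lmodType CC) (ip : H -> H -> CC).
Hypothesis ip_linear :
  forall (a : CC) (x y z : H), ip (a *: x + y) z = a * ip x z + ip y z.
Hypothesis ip_conj : forall x y : H, ip y x = (ip x y)^*.

Lemma ipDl x y z : ip (x + y) z = ip x z + ip y z.
Proof. by have := ip_linear 1 x y z; rewrite scale1r mul1r. Qed.

Lemma ipBl x y z : ip (x - y) z = ip x z - ip y z.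
Proof.
by have := ip_linear (-1) y x z; rewrite scaleN1r mulN1r addrC [_ + ip x z]addrC.
Qed.

Lemma ip0l z : ip 0 z = 0.
Proof. by apply/(@addrI _ (ip 0 z)); rewrite -ipDl !addr0. Qed.

Lemma ipDr x y z : ip z (x + y) = ip z x + ip z y.
Proof. by rewrite !(ip_conj _ z) ipDl rmorphD. Qed.

Lemma ipBr x y z : ip z (x - y) = ip z x - ip z y.
Proof. by rewrite !(ip_conj _ z) ipBl rmorphB. Qed.

Lemma ip0r z : ip z 0 = 0.
Proof. by rewrite ip_conj ip0l rmorph0. Qed.

Lemma is_adjoint_sym (T S : H -> H) : is_adjoint ip T S -> is_adjoint ip S T.
Proof. by move=> hTS x y; rewrite ip_conj -hTS -ip_conj. Qed.

Hypothesis ip_definite : forall x : H, ip x x = 0 -> x = 0.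

Lemma is_adjoint_unique (T S S' : H -> H) :
  is_adjoint ip T S -> is_adjoint ip T S' -> S = S'.
Proof.
move=> hS hS'; apply: functional_extensionality => y; apply/eqP.
rewrite -subr_eq0; apply/eqP/ip_definite.
by rewrite ipBl (ip_conj _ (S y)) (ip_conj _ (S' y)) -hS -hS' subrr.
Qed.

Lemma operator_system_adjoint (V : (H -> H) -> Prop) (T S : H -> H) :
  operator_system ip V -> V T -> is_adjoint ip T S -> V S.
Proof.
case=> _ _ _ Vadj VT hTS; have [S' [VS' hTS']] := Vadj T VT.
by rewrite (is_adjoint_unique hTS hTS').
Qed.

End Sesquilinear.

Section BoundedOperator.
Variables (H : lmodType CC) (ip : H -> H -> CC) (T : H -> H).
Hypothesis hT : bounded_op ip T.

Lemma bounded_opD x y : T (x + y) = T x + T y.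
Proof. by have := hT.1 1 x y; rewrite !scale1r. Qed.

Lemma bounded_op0 : T 0 = 0.
Proof. by apply/(@addrI _ (T 0)); rewrite -bounded_opD !addr0. Qed.

Lemma bounded_opN x : T (- x) = - T x.
Proof. by apply/(@addrI _ (T x)); rewrite -bounded_opD !subrr bounded_op0. Qed.

End BoundedOperator.

Section Projection.
Variables (H : lmodType CC) (ip : H -> H -> CC).
Hypothesis ip_linear :
  forall (a : CC) (x y z : H), ip (a *: x + y) z = a * ip x z + ip y z.
Hypothesis ip_conj : forall x y : H, ip y x = (ip x y)^*.
Variable p : H -> H.
Hypothesis hp : is_projection ip p.
Local Notation q := (compl p).

Let p_bounded : bounded_op ip p. Proof. by case: hp. Qed.
Let pp x : p (p x) = p x. Proof. by case: hp. Qed.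
Let p_adj : is_adjoint ip p p. Proof. by case: hp. Qed.
Let pD := bounded_opD p_bounded.

Lemma proj_compl x : p (q x) = 0.
Proof. by rewrite /compl pD (bounded_opN p_bounded) pp subrr. Qed.

Lemma compl_proj x : q (p x) = 0.
Proof. by rewrite /compl pp subrr. Qed.

Lemma compl_idem x : q (q x) = q x.
Proof. by rewrite {1}/compl proj_compl subr0. Qed.

Lemma complD x y : q (x + y) = q x + q y.
Proof. by rewrite /compl pD opprD addrACA. Qed.

Lemma compl0 : q 0 = 0.
Proof. by rewrite /compl (bounded_op0 p_bounded) subrr. Qed.

Lemma proj_add_compl x : p x + q x = x.
Proof. by rewrite /compl addrC subrK. Qed.

Lemma compl_adjoint : is_adjoint ip q q.
Proof. by move=> x y; rewrite /compl (ipBl ip_linear) (ipBr ip_linear ip_conj) p_adj. Qed.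

Lemma ip_proj_compl u v : ip (p u) (q v) = 0.
Proof. by rewrite p_adj proj_compl (ip0r ip_linear ip_conj). Qed.

Lemma ip_compl_proj u v : ip (q u) (p v) = 0.
Proof. by rewrite compl_adjoint compl_proj (ip0r ip_linear ip_conj). Qed.

Lemma ip_proj_add_compl u w x y :
  ip (p u + q w) (p x + q y) = ip (p u) x + ip (q w) y.
Proof.
rewrite (ipDl ip_linear) !(ipDr ip_linear ip_conj (p x) (q y)).
rewrite ip_proj_compl ip_compl_proj addr0 add0r.
by rewrite -p_adj pp -compl_adjoint compl_idem.
Qed.

Definition compression (y : 'M[H -> H]_2) : 'M[H -> H]_2 :=
  let d := mx2 p (fun _ => 0) (fun _ => 0) q in
  \matrix_(i < 2, j < 2) (fun x => \sum_(k < 2) \sum_(l < 2) d i k (y k l (d l j x))).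

Definition corner_op (a c d b : H -> H) : H -> H :=
  fun x => p (a (p x)) + p (c (q x)) + q (d (p x)) + q (b (q x)).

Variables a c d b : H -> H.
Hypotheses (a0 : a 0 = 0) (c0 : c 0 = 0) (d0 : d 0 = 0) (b0 : b 0 = 0).

Let i1 : 'I_2 := lift ord0 ord0.

Lemma compression_form (x : 'I_2 -> H) :
  \sum_(i < 2) ip (\sum_(j < 2) compression (mx2 a c d b) i j (x j)) (x i)
  = ip (corner_op a c d b (p (x ord0) + q (x i1))) (p (x ord0) + q (x i1)).
Proof.
have p0 := bounded_op0 p_bounded.
rewrite !big_ord_recl !big_ord0 !mxE /= !big_ord_recl !big_ord0 !mxE /=.
rewrite a0 c0 d0 b0 p0 compl0 !addr0 !add0r /corner_op.
rewrite pD pp proj_compl complD compl_proj compl_idem addr0 add0r.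
by rewrite -[in RHS]addrA -!pD -!complD ip_proj_add_compl !(ipDl ip_linear).
Qed.

Lemma mx_pos_compression :
  mx_pos ip (compression (mx2 a c d b)) <-> op_pos ip (corner_op a c d b).
Proof.
split=> [hpos x | hpos x].
  by have := hpos (fun _ => x); rewrite compression_form proj_add_compl.
by rewrite compression_form.
Qed.

End Projection.

Lemma mx2_entries (H : lmodType CC) (P : (H -> H) -> Prop) (a c d b : H -> H) :
  P a -> P c -> P d -> P b -> forall i j : 'I_2, P (mx2 a c d b i j).
Proof. by move=> Pa Pc Pd Pb [[|[|i]] Hi] [[|[|j]] Hj]; rewrite mxE. Qed.

Lemma mx2_selfadj (H : lmodType CC) (ip : H -> H -> CC) (a c d b : H -> H) :
  (forall x y : H, ip y x = (ip x y)^*) ->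
  is_adjoint ip a a -> is_adjoint ip b b -> is_adjoint ip c d ->
  mx_selfadj ip (mx2 a c d b).
Proof.
move=> ip_conj ha hb hcd [[|[|i]] Hi] [[|[|j]] Hj]; rewrite !mxE //=.
exact: is_adjoint_sym.
Qed.

Theorem lemma5p1 (H : lmodType CC) (ip : H -> H -> CC) (hH : is_hilbert ip)
  (V : (H -> H) -> Prop) (hV : operator_system ip V)
  (p : H -> H) (hpV : V p) (hp : is_projection ip p)
  (a b c cs : H -> H) (haV : V a) (hbV : V b) (hcV : V c)
  (hcs : is_adjoint ip c cs) (ha : is_adjoint ip a a) (hb : is_adjoint ip b b) :
  let q := compl p in
  op_pos ip (fun x => p (a (p x)) + p (c (q x)) + q (cs (p x)) + q (b (q x)))
  <-> Cpq ip V p (mx2 a c cs b).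
Proof.
case: hH => ip_linear ip_conj _ ip_definite _ q.
have csV : V cs := operator_system_adjoint ip_linear ip_conj ip_definite hV hcV hcs.
have op0 T : V T -> T 0 = 0.
  by case: hV => V_bounded _ _ _ VT; exact: bounded_op0 (V_bounded T VT).
have [to_op to_mx] := mx_pos_compression ip_linear ip_conj hp
  (op0 a haV) (op0 c hcV) (op0 cs csV) (op0 b hbV).
split=> [hT | [_ _ hm]]; last exact: to_op.
split; [exact: mx2_entries | exact: mx2_selfadj | exact: to_mx].
Qed.
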